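(* Let $p$ be an odd prime, $\xi$ a primitive $p$th root of unity, and $n\in\mathbb Z$ such that $\mathbb Z[1/n][\xi]$ and $\mathbb Z[1/n][\xi+\xi^{-1}]$ are principal ideal domains and $p\mid n$. Let $P$ be a subgroup of order $p$ in $\mathrm{Sp}(p-1,\mathbb Z[1/n])$ with normalizer $N(P)$ and centralizer $C(P)$. Then the action of $N(P)/C(P)$ on $C(P)$ (by conjugation) is given by the action of the Galois group $\mathrm{Gal}(\mathbb Q(\xi)/\mathbb Q)$ on the unit group $\mathbb Z[1/n][\xi]^*$. Moreover $N(P)/C(P)$ acts faithfully on $C(P)$.
   Context: $\mathrm{Sp}(2m,R)=\{M\in\mathrm{GL}(2m,R): M^{\mathrm T}JM=J\}$ with $J=\begin{pmatrix}0&I_m\\-I_m&0\end{pmatrix}$; normalizer and centralizer are taken in $\mathrm{Sp}(p-1,\mathbb Z[1/n])$. *)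

From mathcomp Require Import all_boot all_order all_algebra all_field.
Set Implicit Arguments. Unset Strict Implicit. Unset Printing Implicit Defensive.
Import Order.TTheory GRing.Theory Num.Theory.
Local Open Scope ring_scope.

(* Z[1/n] as a subset of Q: q such that q * n^k is an integer for some k. *)
Definition Zinv (n : int) (q : rat) : Prop :=
  exists k : nat, (q * (n%:~R) ^+ k) \is a Num.int.

(* The ring Z[1/n][a] inside algC: polynomial expressions in a with
   coefficients in Z[1/n]. *)
Definition Zinv_adj (n : int) (a : algC) (x : algC) : Prop :=
  exists s : seq rat, (forall i : nat, (i < size s)%N -> Zinv n s`_i) /\
    x = \sum_(i < size s) ratr s`_i * a ^+ i.

Definition ideal_in (S I : algC -> Prop) : Prop :=
  (forall x, I x -> S x) /\ I 0 /\ (forall x y, I x -> I y -> I (x + y)) /\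
  (forall r x, S r -> I x -> I (r * x)).

Definition is_PID (S : algC -> Prop) : Prop :=
  forall I, ideal_in S I ->
    exists a, S a /\ forall x, I x <-> exists r, S r /\ x = r * a.

Definition unit_in (S : algC -> Prop) (x : algC) : Prop :=
  S x /\ x != 0 /\ S x^-1.

Definition Jmat (m : nat) : 'M[rat]_(m + m) := block_mx 0 1%:M (- 1%:M) 0.

Definition in_Sp (m : nat) (n : int) (M : 'M[rat]_(m + m)) : Prop :=
  (forall i j, Zinv n (M i j)) /\ M^T *m Jmat m *m M = Jmat m.

Definition subgroup_of_order (m : nat) (n : int) (P : seq 'M[rat]_(m + m))
    (k : nat) : Prop :=
  uniq P /\ size P = k /\ (forall x, x \in P -> in_Sp n x) /\
  1%:M \in P /\
  (forall x y, x \in P -> y \in P -> x *m y \in P) /\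
  (forall x, x \in P -> invmx x \in P).

Definition normalizer (m : nat) (n : int) (P : seq 'M[rat]_(m + m))
    (g : 'M[rat]_(m + m)) : Prop :=
  in_Sp n g /\ forall x, (x \in P) = (g *m x *m invmx g \in P).

Definition centralizer (m : nat) (n : int) (P : seq 'M[rat]_(m + m))
    (g : 'M[rat]_(m + m)) : Prop :=
  in_Sp n g /\ forall x, x \in P -> g *m x = x *m g.

Definition hdim (p : nat) : nat := (p.-1)./2.

(* Let x generate P.  As x^p = 1, x != 1 and the dimension is p - 1, the eigenvalues
   of x over algC are the p - 1 primitive roots xi^k, each with a line E_k of
   eigenvectors, and E_k is the image of E_1 under the automorphism sigma_k of Q(xi).
   An element c of C(P) commutes with x, so it acts on E_k by a scalar, namely
   sigma_k (phi c), where phi c ([xi_eigval c]) is its eigenvalue on E_1.  Hence phi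
   is an injective homomorphism, and Fourier inversion of the traces tr (c x^j), which
   lie in Z[1/n], puts phi c in Z[1/n][xi] because p | n.  An element g of N(P)
   conjugates x to some x^k with k prime to p and maps E_1 onto E_k, whence
   phi (g c g^-1) = sigma_k (phi c); so psi g ([conj_aut g]) is sigma_k.  The action
   is faithful because x itself lies in C(P). *)

From mathcomp Require Import all_boot all_order all_algebra all_field.
From mathcomp Require Import all_fingroup all_solvable zify.
Set Implicit Arguments. Unset Strict Implicit. Unset Printing Implicit Defensive.
Import Order.TTheory GRing.Theory Num.Theory.
Local Open Scope ring_scope.

Section ZinvClosure.
Variable n : int.

Lemma Zinv_int (z : int) : Zinv n z%:~R.
Proof. by exists 0%N; rewrite expr0 mulr1 intr_int. Qed.

Lemma ZinvD a b : Zinv n a -> Zinv n b -> Zinv n (a + b).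
Proof.
move=> [k Ha] [l Hb]; exists (k + l)%N.
have nX j : (n%:~R : rat) ^+ j \is a Num.int by rewrite rpredX ?intr_int.
rewrite mulrDl exprD !mulrA [X in _ + X]mulrAC.
by apply: rpredD; apply: rpredM.
Qed.

Lemma ZinvM a b : Zinv n a -> Zinv n b -> Zinv n (a * b).
Proof. by move=> [k Ha] [l Hb]; exists (k + l)%N; rewrite exprD mulrACA rpredM. Qed.

Lemma ZinvN a : Zinv n a -> Zinv n (- a).
Proof. by move=> [k Ha]; exists k; rewrite mulNr rpredN. Qed.

Lemma Zinv_sum I (r : seq I) (P : pred I) (F : I -> rat) :
  (forall i, P i -> Zinv n (F i)) -> Zinv n (\sum_(i <- r | P i) F i).
Proof. by move=> ZF; apply: big_ind => //; [exact: (Zinv_int 0) | exact: ZinvD]. Qed.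

Lemma Zinv_invn (d : nat) : (0 < d)%N -> (d%:Z %| n)%Z -> Zinv n d%:R^-1.
Proof.
move=> d_gt0 /dvdzP [q ->]; exists 1%N.
rewrite expr1 rmorphM /= mulrCA -[d%:Z%:~R]/(d%:R : rat) mulVf ?mulr1 ?intr_int //.
by rewrite pnatr_eq0 -lt0n.
Qed.

Definition Zinv_mx {m1 m2} (A : 'M[rat]_(m1, m2)) := forall i j, Zinv n (A i j).

Lemma Zinv_mxM m1 m2 m3 (A : 'M[rat]_(m1, m2)) (B : 'M[rat]_(m2, m3)) :
  Zinv_mx A -> Zinv_mx B -> Zinv_mx (A *m B).
Proof. by move=> ZA ZB i j; rewrite mxE; apply: Zinv_sum => k _; apply: ZinvM. Qed.

Lemma Zinv_mxN m1 m2 (A : 'M[rat]_(m1, m2)) : Zinv_mx A -> Zinv_mx (- A).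
Proof. by move=> ZA i j; rewrite mxE; apply: ZinvN. Qed.

Lemma Zinv_trace m1 (A : 'M[rat]_m1) : Zinv_mx A -> Zinv n (\tr A).
Proof. by move=> ZA; apply: Zinv_sum. Qed.

End ZinvClosure.

Lemma Zinv_adj_gen (n : int) (a : algC) : Zinv_adj n a a.
Proof.
exists [:: 0; 1]; split.
  by case=> [|[|]] // _; [exact: (Zinv_int n 0) | exact: (Zinv_int n 1)].
by rewrite big_ord_recl big_ord1 /= rmorph0 rmorph1 mul0r add0r mul1r expr1.
Qed.

Lemma Zinv_adj_rmorph_eq (n : int) (a : algC) (f g : {rmorphism algC -> algC}) :
  f a = g a -> forall y, Zinv_adj n a y -> f y = g y.
Proof.
move=> fg_a y [s [_ ->]]; rewrite !rmorph_sum; apply: eq_bigr => i _.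
by rewrite (rmorphM f) (rmorphM g) !fmorph_rat !rmorphXn fg_a.
Qed.

Definition coprime_or1 (p k : nat) : nat := if coprime k p then k else 1%N.

Lemma coprime_or1P p k : coprime (coprime_or1 p k) p.
Proof. by rewrite /coprime_or1; case: ifP => // _; apply: coprime1n. Qed.

(* For [k] not coprime to [p], [cyclo_aut p k] is an automorphism fixing the
   [p]-th roots of unity. *)
Definition cyclo_aut (p k : nat) : {rmorphism algC -> algC} :=
  sval (Qn_aut_exists (coprime_or1P p k)).

Lemma cyclo_autE p k z : coprime k p -> z ^+ p = 1 -> cyclo_aut p k z = z ^+ k.
Proof.
by move=> kp zp; rewrite /cyclo_aut; case: Qn_aut_exists => u /= ->; rewrite /coprime_or1 ?kp.
Qed.

Lemma map_mx_ratr_fixed (f : {rmorphism algC -> algC}) m1 m2 (A : 'M[rat]_(m1, m2)) :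
  map_mx f (map_mx ratr A) = map_mx ratr A.
Proof. by rewrite -map_mx_comp; apply: eq_map_mx => q /=; rewrite fmorph_rat. Qed.

Section RankOneLines.
Variables (F : fieldType) (n : nat).
Implicit Types (u w : 'rV[F]_n) (L C : 'M[F]_n).

(* Junk value [0] when [u = 0]. *)
Definition rV_ratio u w : F :=
  if [pick j | u 0 j != 0] is Some j then w 0 j / u 0 j else 0.

Lemma rV_ratioZ u a : u != 0 -> rV_ratio u (a *: u) = a.
Proof.
move=> u_neq0; rewrite /rV_ratio; case: pickP => [j uj_neq0 | u0]; first by rewrite mxE mulfK.
case/eqP: u_neq0; apply/rowP => j; rewrite mxE.
by move/negbFE/eqP: (u0 j).
Qed.

Lemma rank1_stable_scale L C w u : \rank L = 1%N -> stablemx L C ->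
  (w <= L)%MS -> w != 0 -> (u <= L)%MS -> u *m C = rV_ratio w (w *m C) *: u.
Proof.
move=> rkL stabL wL w_neq0 uL.
have sub_w eigenvec : (eigenvec <= L)%MS -> exists a, eigenvec = a *: w.
  move=> vL; apply/sub_rVP; apply: submx_trans vL _.
  by rewrite -(mxrank_leqif_sup wL).2 rkL rank_rV w_neq0.
have [a ->] := sub_w _ uL.
have [b wC] := sub_w _ (submx_trans (submxMr C wL) stabL).
by rewrite -scalemxAl wC rV_ratioZ // scalerA mulrC -scalerA.
Qed.

Lemma mxdirect_rank1 (E : 'I_n -> 'M[F]_n) :
  mxdirect (\sum_i E i) -> (forall i, E i != 0) -> forall i, \rank (E i) = 1%N.
Proof.
move=> /mxdirectP /= rk_sum E_neq0 i.
have rk_gt0 j : (0 < \rank (E j))%N by rewrite lt0n mxrank_eq0.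
have : (\sum_(j < n) 1 + \sum_(j < n) (\rank (E j)).-1 <= n)%N.
  rewrite -big_split /= (eq_bigr _ (fun j _ => add1n _)).
  by rewrite (eq_bigr _ (fun j _ => prednK (rk_gt0 j))) -rk_sum rank_leq_col.
rewrite sum1_card card_ord -[X in (_ <= X)%N]addn0 leq_add2l leqn0 sum_nat_eq0.
move=> /forallP /(_ i) /eqP.
by move: (rk_gt0 i); case: (\rank (E i)) => [|[|]].
Qed.

Lemma mxdirect_rank1_full (E : 'I_n -> 'M[F]_n) :
  mxdirect (\sum_i E i) -> (forall i, \rank (E i) = 1%N) -> row_full (\sum_i E i).
Proof.
move=> /mxdirectP /= rk_sum rkE; rewrite /row_full rk_sum (eq_bigr _ (fun i _ => rkE i)).
by rewrite sum1_card card_ord.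
Qed.

Lemma eigen_rows_diag B C (d : 'rV[F]_n) : B \in unitmx ->
  (forall i, row i B *m C = d 0 i *: row i B) -> C = invmx B *m diag_mx d *m B.
Proof.
move=> B_unit rowBC; rewrite -mulmxA -[LHS]mul1mx -(mulVmx B_unit) -mulmxA; congr (_ *m _).
by apply/row_matrixP => i; rewrite !row_mul rowBC row_diag_mx -scalemxAl -rowE.
Qed.

End RankOneLines.

Section PrimeOrderSubset.
Variables (R : unitRingType) (p : nat) (P : seq R) (x : R).
Hypotheses (p_prime : prime p) (P_uniq : uniq P) (P_size : size P = p).
Hypotheses (P_unit : {in P, forall y, y \is a GRing.unit}) (P1 : 1 \in P).
Hypotheses (P_mul : {in P &, forall y z, y * z \in P}) (xP : x \in P) (x_neq1 : x != 1).

Lemma expx_in k : x ^+ k \in P.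
Proof. by elim: k => [|k IHk]; rewrite ?expr0 // exprSr P_mul. Qed.

(* Lagrange's theorem reaches [P] through its right regular representation. *)
Let T := seq_sub P.

Let right_mul (y z : T) : T := SeqSub (P_mul (ssvalP z) (ssvalP y)).

Let right_mul_inj y : injective (right_mul y).
Proof. by move=> z1 z2 /(congr1 val) /(mulIr (P_unit (ssvalP y))) /val_inj. Qed.

Let rperm (y : T) : {perm T} := perm (@right_mul_inj y).

Let rpermE y z : val (rperm y z) = val z * val y.
Proof. by rewrite permE. Qed.

Let rperm_inj : injective rperm.
Proof.
move=> y z /(congr1 (fun s : {perm T} => val (s (SeqSub P1)))).
by rewrite !rpermE !mul1r => /val_inj.
Qed.

Let rpermX k : (rperm (SeqSub xP) ^+ k)%g = rperm (SeqSub (expx_in k)).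
Proof.
elim: k => [|k IHk]; apply/permP => z; apply: val_inj.
  by rewrite perm1 rpermE /= expr0 mulr1.
by rewrite expgSr permM IHk !rpermE /= -mulrA -exprSr.
Qed.

Let rperm_group : group_set [set rperm y | y : T].
Proof.
apply/andP; split.
  apply/imsetP; exists (SeqSub P1) => //.
  by apply/permP => z; apply: val_inj; rewrite perm1 rpermE mulr1.
apply/subsetP => _ /mulsgP [_ _ /imsetP [y _ ->] /imsetP [z _ ->] ->].
apply/imsetP; exists (SeqSub (P_mul (ssvalP y) (ssvalP z))) => //.
by apply/permP => w; apply: val_inj; rewrite permM !rpermE mulrA.
Qed.

Let card_rperm : #|Group rperm_group| = p.
Proof. by rewrite card_imset ?card_seq_sub // P_size. Qed.

Let order_rperm_x : #[rperm (SeqSub xP)]%g = p.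
Proof.
have : (#[rperm (SeqSub xP)]%g %| #|Group rperm_group|)%N by apply/order_dvdG/imset_f.
rewrite card_rperm; apply/prime_nt_dvdP => //; rewrite order_eq1.
apply/eqP => /(congr1 (fun s : {perm T} => val (s (SeqSub P1)))).
by rewrite perm1 rpermE mul1r => /eqP; rewrite (negbTE x_neq1).
Qed.

Lemma eq_expx a b : (x ^+ a == x ^+ b) = (a == b %[mod p])%N.
Proof.
rewrite -order_rperm_x -eq_expg_mod_order !rpermX; apply/eqP/eqP => [xab | /rperm_inj].
  by congr rperm; apply: val_inj.
by move/(congr1 val).
Qed.

Lemma expx_order : x ^+ p = 1.
Proof. by apply/eqP; rewrite -(expr0 x) eq_expx modnn mod0n. Qed.

Lemma in_P_expx y : y \in P -> exists k, y = x ^+ k.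
Proof.
move=> yP; have : rperm (SeqSub yP) \in <[rperm (SeqSub xP)]>%g.
  suff -> : <[rperm (SeqSub xP)]>%g = Group rperm_group by apply: imset_f.
  apply/eqP; rewrite eqEcard cycle_subG imset_f //= card_rperm.
  by rewrite -orderE order_rperm_x.
by case/cycleP => k; rewrite rpermX => /rperm_inj /(congr1 val) /= ->; exists k.
Qed.

(* Discrete logarithm to base [x]; it is [p] when [y] is not a power of [x]. *)
Definition logx (y : R) : nat := find (fun k => x ^+ k == y) (iota 0 p).

Lemma logx_lt y : y \in P -> (logx y < p)%N.
Proof.
move=> /in_P_expx [k ->]; rewrite -[X in (_ < X)%N](size_iota 0 p) -has_find.
apply/hasP; exists (k %% p)%N; first by rewrite mem_iota ltn_mod prime_gt0.
by rewrite eq_expx modn_mod.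
Qed.

Lemma expx_logx y : y \in P -> x ^+ logx y = y.
Proof.
move=> yP; have has_y : has (fun k => x ^+ k == y) (iota 0 p).
  by rewrite has_find size_iota logx_lt.
by have /eqP := nth_find 0%N has_y; rewrite nth_iota ?add0n ?logx_lt.
Qed.

End PrimeOrderSubset.

Lemma eigenspace_expmx (F : fieldType) n (A : 'M[F]_n.+1) a (u : 'rV_n.+1) j :
  (u <= eigenspace A a)%MS -> u *m A ^+ j = a ^+ j *: u.
Proof.
move=> /eigenspaceP uA; elim: j => [|j IHj]; first by rewrite !expr0 scale1r mulmx1.
by rewrite exprSr mulmxA IHj -scalemxAl uA scalerA -exprSr.
Qed.

Lemma sum_expr_root1 (R : idomainType) n (z : R) :
  z ^+ n = 1 -> z != 1 -> \sum_(j < n) z ^+ j = 0.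
Proof.
move=> zn z_neq1; apply/eqP; move: (subrX1 z n); rewrite zn subrr => /esym /eqP.
by rewrite mulf_eq0 subr_eq0 (negbTE z_neq1).
Qed.

Lemma conjr_expr (R : unitRingType) (g y : R) k :
  g \is a GRing.unit -> g * y ^+ k / g = (g * y / g) ^+ k.
Proof.
move=> g_unit; elim: k => [|k IHk]; first by rewrite !expr0 mulr1 divrr.
by rewrite [RHS]exprS -IHk !mulrA divrK // -(mulrA g y) -exprS.
Qed.

Definition centralizer_in N (S : 'M[rat]_N -> Prop) (P : seq 'M[rat]_N) c :=
  S c /\ forall y, y \in P -> c *m y = y *m c.

Definition normalizer_in N (S : 'M[rat]_N -> Prop) (P : seq 'M[rat]_N) g :=
  S g /\ forall y, (y \in P) = (g *m y *m invmx g \in P).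

Section RationalMatrixOfPrimeOrder.
Variables (m : nat) (xi : algC) (x : 'M[rat]_m.+1).
Local Notation p := m.+2.
Hypotheses (p_prime : prime p) (xi_prim : p.-primitive_root xi).
Hypotheses (x_order : x ^+ p = 1) (x_neq1 : x != 1).

Local Notation "A %:C" := (map_mx (@ratr algC) A) (at level 2, format "A %:C").
Local Notation X := x%:C.

Lemma ratmxX (A : 'M[rat]_m.+1) j : (A ^+ j)%:C = A%:C ^+ j.
Proof. exact: rmorphXn. Qed.

Lemma comm_ratmx c : GRing.comm x c -> comm_mx X c%:C.
Proof. by move=> xc; rewrite /comm_mx -!map_mxM !mulmxE xc. Qed.

Lemma coprime_succ_ord (i : 'I_m.+1) : coprime i.+1 p.
Proof. by rewrite coprime_sym prime_coprime // gtnNdvd // ltnS ltn_ord. Qed.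

Let xi_order : xi ^+ p = 1 := prim_expr_order xi_prim.

Lemma cyclo_aut_xi k : coprime k p -> cyclo_aut p k xi = xi ^+ k.
Proof. by move=> kp; apply: cyclo_autE kp xi_order. Qed.

Definition eigenline k := eigenspace X (xi ^+ k).

Lemma eigenline_conj k : coprime k p -> eigenline k = map_mx (cyclo_aut p k) (eigenline 1).
Proof.
move=> kp; rewrite /eigenline /eigenspace map_kermx map_mxB map_scalar_mx map_mx_ratr_fixed.
by rewrite expr1 cyclo_aut_xi.
Qed.

(* Otherwise all the Galois conjugates [X - xi^k] of [X - xi] would be invertible,
   whereas their product with [X - 1 != 0] is [X^p - 1 = 0]. *)
Lemma X_sub_xi_singular : X - xi%:M \notin unitmx.
Proof.
apply/negP => X_xi_unit.
have X_xik_unit k : (0 < k < p)%N -> X - (xi ^+ k)%:M \in unitmx.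
  case/andP => k_gt0 k_lt_p; have kp : coprime k p by rewrite coprime_sym prime_coprime ?gtnNdvd.
  have -> : X - (xi ^+ k)%:M = map_mx (cyclo_aut p k) (X - xi%:M).
    by rewrite map_mxB map_scalar_mx map_mx_ratr_fixed cyclo_aut_xi.
  by rewrite map_unitmx.
have : \prod_(0 <= i < p) (X - (xi ^+ i)%:M) = 0.
  have := congr1 (horner_mx X) (factor_Xn_sub_1 xi_prim).
  rewrite rmorph_prod rmorphB rmorphXn /= horner_mx_X rmorph1 -ratmxX x_order map_mx1 subrr.
  by move=> <-; apply: eq_bigr => i _; rewrite rmorphB /= horner_mx_X horner_mx_C.
rewrite big_ltn // expr0 => /(congr1 (fun M => M / \prod_(1 <= i < p) (X - (xi ^+ i)%:M))).
rewrite mul0r mulrK => [/eqP | ]; last first.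
  rewrite big_nat; apply: (big_ind (fun M => M \in unitmx)) => [|A B uA uB|i /X_xik_unit //].
    exact: unitmx1.
  by rewrite -mulmxE unitmx_mul uA.
rewrite subr_eq0 => /eqP xC1; move/eqP: x_neq1; apply; apply: (map_mx_inj (f := @ratr algC)).
by rewrite xC1 map_mx1.
Qed.

Lemma eigenline_neq0 k : coprime k p -> eigenline k != 0.
Proof.
move=> kp; rewrite eigenline_conj // map_mx_eq0 /eigenline /eigenspace expr1.
rewrite kermx_eq0 row_free_unit.
exact: X_sub_xi_singular.
Qed.

Lemma mxdirect_eigenline : mxdirect (\sum_(i < m.+1) eigenline i.+1).
Proof.
apply: mxdirect_sum_eigenspace => i j _ _ /eqP.
have [lt_i lt_j] : (i.+1 < p)%N /\ (j.+1 < p)%N by split; rewrite ltnS ltn_ord.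
by rewrite (eq_prim_root_expr xi_prim) !modn_small // => /eqP [] /val_inj.
Qed.

Lemma rank_eigenline k : coprime k p -> \rank (eigenline k) = 1%N.
Proof.
move=> kp; rewrite eigenline_conj // mxrank_map.
exact: (mxdirect_rank1 mxdirect_eigenline (fun i => eigenline_neq0 (coprime_succ_ord i)) ord0).
Qed.

Definition eigenvec k := nz_row (eigenline k).

Lemma eigenvec_sub k : (eigenvec k <= eigenline k)%MS.
Proof. exact: nz_row_sub. Qed.

Lemma eigenvec_neq0 k : coprime k p -> eigenvec k != 0.
Proof. by move=> kp; rewrite nz_row_eq0 eigenline_neq0. Qed.

Definition eigval k (C : 'M[algC]_m.+1) := rV_ratio (eigenvec k) (eigenvec k *m C).

Lemma eigvalP k C (u : 'rV_m.+1) : coprime k p -> comm_mx X C ->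
  (u <= eigenline k)%MS -> u *m C = eigval k C *: u.
Proof.
move=> kp XC uE.
apply: rank1_stable_scale (rank_eigenline kp) _ (eigenvec_sub k) (eigenvec_neq0 kp) uE.
exact: comm_mx_stable_eigenspace.
Qed.

Lemma eigval_eq k C (u : 'rV_m.+1) a : coprime k p -> comm_mx X C ->
  (u <= eigenline k)%MS -> u != 0 -> u *m C = a *: u -> eigval k C = a.
Proof.
move=> kp XC uE u_neq0; rewrite (eigvalP kp XC uE) => eq_au.
by rewrite -(rV_ratioZ (eigval k C) u_neq0) eq_au rV_ratioZ.
Qed.

Definition xi_eigval (c : 'M[rat]_m.+1) := eigval 1 c%:C.

Lemma eigenvec1_mul c : GRing.comm x c -> eigenvec 1 *m c%:C = xi_eigval c *: eigenvec 1.
Proof.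
by move=> xc; apply: eigvalP (eigenvec_sub 1) => //; [exact: coprime1n | exact: comm_ratmx].
Qed.

Lemma eigval_conj k c : coprime k p -> GRing.comm x c ->
  eigval k c%:C = cyclo_aut p k (xi_eigval c).
Proof.
move=> kp xc; apply: (eigval_eq (u := map_mx (cyclo_aut p k) (eigenvec 1)) kp (comm_ratmx xc)).
- by rewrite eigenline_conj // map_submx eigenvec_sub.
- by rewrite map_mx_eq0 eigenvec_neq0 ?coprime1n.
- by rewrite -[c%:C](map_mx_ratr_fixed (cyclo_aut p k)) -map_mxM eigenvec1_mul // map_mxZ.
Qed.

Lemma eigvalM k C D : coprime k p -> comm_mx X C -> comm_mx X D ->
  eigval k (C *m D) = eigval k C * eigval k D.
Proof.
move=> kp XC XD; apply: (eigval_eq kp (comm_mxM XC XD) (eigenvec_sub k) (eigenvec_neq0 kp)).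
rewrite mulmxA (eigvalP kp XC (eigenvec_sub k)) -scalemxAl.
by rewrite (eigvalP kp XD (eigenvec_sub k)) scalerA.
Qed.

Lemma xi_eigvalM c d : GRing.comm x c -> GRing.comm x d ->
  xi_eigval (c * d) = xi_eigval c * xi_eigval d.
Proof. by move=> xc xd; rewrite /xi_eigval map_mxM eigvalM ?coprime1n //; apply: comm_ratmx. Qed.

Lemma eigval_expx k j : coprime k p -> eigval k (x ^+ j)%:C = xi ^+ (k * j).
Proof.
move=> kp; have xxj := comm_ratmx (commrX j (commr_refl x)).
apply: (eigval_eq kp xxj (eigenvec_sub k) (eigenvec_neq0 kp)).
by rewrite ratmxX (eigenspace_expmx _ (eigenvec_sub k)) exprM.
Qed.

Lemma xi_eigval1 : xi_eigval 1 = 1.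
Proof. by have := eigval_expx 0 (coprime1n p); rewrite muln0 !expr0. Qed.

Definition eigbasis : 'M[algC]_m.+1 := \matrix_(i < m.+1) eigenvec i.+1.

Lemma eigbasis_unit : eigbasis \in unitmx.
Proof.
rewrite -row_full_unit -sub1mx.
have E_full : row_full (\sum_(i < m.+1) eigenline i.+1).
  by apply: mxdirect_rank1_full mxdirect_eigenline _ => i; rewrite rank_eigenline ?coprime_succ_ord.
rewrite -sub1mx in E_full; apply: submx_trans E_full _; apply/sumsmx_subP => i _.
apply: submx_trans (row_sub i eigbasis); rewrite rowK.
have vi_neq0 := eigenvec_neq0 (coprime_succ_ord i).
rewrite -(mxrank_leqif_sup (eigenvec_sub _)).2 ?rank_eigenline ?coprime_succ_ord //.
by rewrite rank_rV vi_neq0.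
Qed.

Lemma eigbasis_diag C : comm_mx X C ->
  C = invmx eigbasis *m diag_mx (\row_i eigval i.+1 C) *m eigbasis.
Proof.
move=> XC; apply: eigen_rows_diag eigbasis_unit _ => i.
by rewrite rowK mxE (eigvalP (coprime_succ_ord i)) ?eigenvec_sub.
Qed.

Lemma xi_eigval_inj c d : GRing.comm x c -> GRing.comm x d -> xi_eigval c = xi_eigval d -> c = d.
Proof.
move=> xc xd eq_cd; apply: (map_mx_inj (f := @ratr algC)).
rewrite (eigbasis_diag (comm_ratmx xc)) (eigbasis_diag (comm_ratmx xd)).
congr (_ *m diag_mx _ *m _); apply/rowP => i.
by rewrite !mxE !eigval_conj ?coprime_succ_ord ?eq_cd.
Qed.

Lemma trace_eigval C : comm_mx X C -> \tr C = \sum_(i < m.+1) eigval i.+1 C.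
Proof.
move=> XC; rewrite {1}(eigbasis_diag XC) mxtrace_mulC mulmxA mulmxV ?eigbasis_unit //.
by rewrite mul1mx mxtrace_diag; apply: eq_bigr => i _; rewrite mxE.
Qed.

Lemma sum_xi_dual i : (i < p)%N ->
  \sum_(j < p) xi ^+ (i.+1 * (m.+1 * j)) * xi ^+ j = (i == 0)%:R * p%:R.
Proof.
move=> lt_ip; under eq_bigr => j _ do rewrite -exprD mulnA addnC -mulSn exprM.
set z := xi ^+ _.
have z_xi : z * xi ^+ i = 1.
  by rewrite -exprD addSnnS -mulnSr mulnC exprM xi_order expr1n.
have [i0 | i_neq0] := eqVneq i 0%N.
  move: z_xi; rewrite i0 expr0 mulr1 => ->.
  by rewrite (eq_bigr (fun=> 1)) => [|j _]; rewrite ?expr1n // sumr_const card_ord mul1r.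
rewrite mul0r sum_expr_root1 //; first by rewrite -exprM mulnC exprM xi_order expr1n.
apply/eqP => z1; move: z_xi; rewrite z1 mul1r => /eqP.
by rewrite -(prim_order_dvd xi_prim) gtnNdvd // lt0n.
Qed.

(* Fourier inversion: [tr (c x^j) = \sum_i eigval_(i+1) c * xi^((i+1) j)], and
   [x ^+ (m.+1 * j) = x ^- j] isolates the term [i = 0]. *)
Lemma trace_inversion c : GRing.comm x c ->
  p%:R * xi_eigval c = \sum_(j < p) ratr (\tr (c * x ^+ (m.+1 * j))) * xi ^+ j.
Proof.
move=> xc.
have tr_cx j : ratr (\tr (c * x ^+ j)) =
    \sum_(i < m.+1) eigval i.+1 c%:C * xi ^+ (i.+1 * j) :> algC.
  rewrite -trace_map_mx trace_eigval; last exact/comm_ratmx/commrM/commrX.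
  apply: eq_bigr => i _; rewrite map_mxM eigvalM ?eigval_expx ?coprime_succ_ord //.
    exact: comm_ratmx.
  exact/comm_ratmx/commrX.
rewrite (eq_bigr (fun j : 'I_p => \sum_(i < m.+1)
    eigval i.+1 c%:C * (xi ^+ (i.+1 * (m.+1 * j)) * xi ^+ j))); last first.
  by move=> j _; rewrite tr_cx mulr_suml; apply: eq_bigr => i _; rewrite mulrA.
rewrite exchange_big big_ord_recl /= -mulr_sumr sum_xi_dual // mul1r mulrC big1 ?addr0 // => i _.
rewrite -mulr_sumr sum_xi_dual /bump add1n ?mul0r ?mulr0 // !ltnS; exact: ltnW.
Qed.

Lemma xi_eigval_conjg g c k : g \is a GRing.unit -> coprime k p -> g * x = x ^+ k * g ->
  GRing.comm x c -> GRing.comm x (g * c / g) -> xi_eigval (g * c / g) = cyclo_aut p k (xi_eigval c).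
Proof.
move=> g_unit kp gx xc xgc; set u := eigenvec 1 *m g%:C.
have gC_unit : g%:C \in unitmx by rewrite map_unitmx.
have u_neq0 : u != 0.
  apply: contraNneq (eigenvec_neq0 (coprime1n p)) => u0.
  by rewrite -[eigenvec 1](mulmxK gC_unit) -/u u0 mul0mx.
have uE : (u <= eigenline k)%MS.
  apply/eigenspaceP; rewrite /u -mulmxA -map_mxM mulmxE gx map_mxM ratmxX mulmxA.
  by rewrite (eigenspace_expmx _ (eigenvec_sub 1)) expr1 -scalemxAl.
rewrite -eigval_conj //; apply/esym/(eigval_eq kp (comm_ratmx xc) uE u_neq0).
have gc : g *m c = (g * c / g) *m g by rewrite mulmxE divrK.
by rewrite /u -mulmxA -map_mxM gc map_mxM mulmxA (eigenvec1_mul xgc) scalemxAl.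
Qed.

Section CentralizerNormalizer.
Variables (n : int) (S : 'M[rat]_m.+1 -> Prop) (P : seq 'M[rat]_m.+1).
Hypothesis p_dvd_n : (p%:Z %| n)%Z.
Hypotheses (S_unit : forall y, S y -> y \is a GRing.unit) (S_inv : forall y, S y -> S y^-1).
Hypothesis S_Zinv : forall y, S y -> Zinv_mx n y.
Hypotheses (P_uniq : uniq P) (P_size : size P = p) (P_S : forall y, y \in P -> S y).
Hypotheses (P1 : 1 \in P) (P_mul : {in P &, forall y z, y * z \in P}) (xP : x \in P).

Local Notation C := (centralizer_in S P).
Local Notation N := (normalizer_in S P).

Let P_unit : {in P, forall y, y \is a GRing.unit}.
Proof. by move=> y /P_S /S_unit. Qed.

Let eq_expx := eq_expx p_prime P_uniq P_size P_unit P1 P_mul xP x_neq1.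
Let in_P_expx := in_P_expx p_prime P_uniq P_size P_unit P1 P_mul xP x_neq1.
Let logx_lt y (yP : y \in P) := logx_lt p_prime P_uniq P_size P_unit P1 P_mul xP x_neq1 yP.
Let expx_logx := expx_logx p_prime P_uniq P_size P_unit P1 P_mul xP x_neq1.

Lemma comm_x_P c : GRing.comm x c -> forall y, y \in P -> c *m y = y *m c.
Proof.
move=> xc y /in_P_expx [k ->].
by rewrite mulmxE; apply/commrX/commr_sym.
Qed.

Lemma centralizer_comm c : C c -> GRing.comm x c.
Proof. by case=> _ /(_ x xP); rewrite mulmxE. Qed.

Lemma centralizer_x : C x.
Proof. by split; [apply: P_S | apply: comm_x_P]. Qed.

Lemma centralizer_inv c : C c -> C c^-1.
Proof.
case=> Sc cP; split; first exact: S_inv.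
by move=> y /cP; rewrite !mulmxE => yc; apply/esym/commrV/esym.
Qed.

Lemma xi_eigval_Zinv_adj c : C c -> Zinv_adj n xi (xi_eigval c).
Proof.
move=> Cc; exists (mkseq (fun j => \tr (c * x ^+ (m.+1 * j)) / p%:R) p); split.
  move=> j; rewrite size_mkseq => lt_jp; rewrite nth_mkseq //.
  apply: ZinvM; last exact: Zinv_invn.
  by apply/Zinv_trace/Zinv_mxM; apply: S_Zinv; [case: Cc | apply/P_S/expx_in].
have p_neq0 : (p%:R : algC) != 0 by rewrite pnatr_eq0.
rewrite size_mkseq -[LHS](mulKf p_neq0) (trace_inversion (centralizer_comm Cc)) mulr_sumr.
apply: eq_bigr => j _; rewrite nth_mkseq // rmorphM /= fmorphV rmorph_nat.
by rewrite mulrA [_^-1 * _]mulrC.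
Qed.

Lemma xi_eigval_unit c : C c -> unit_in (Zinv_adj n xi) (xi_eigval c).
Proof.
move=> Cc; have Cci := centralizer_inv Cc.
have c_unit : c \is a GRing.unit by apply: S_unit; case: Cc.
have mul_cV : xi_eigval c * xi_eigval c^-1 = 1.
  by rewrite -(xi_eigvalM (centralizer_comm Cc) (centralizer_comm Cci)) (mulrV c_unit) xi_eigval1.
have c_neq0 : xi_eigval c != 0.
  by apply: contra_eq_neq mul_cV => ->; rewrite mul0r eq_sym oner_neq0.
split; first exact: xi_eigval_Zinv_adj.
by split=> //; rewrite (mulr1_eq mul_cV); apply: xi_eigval_Zinv_adj.
Qed.

Let eq_expx_xi a b : (x ^+ a == x ^+ b) = (xi ^+ a == xi ^+ b).
Proof. by rewrite eq_expx (eq_prim_root_expr xi_prim). Qed.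

Definition conj_exp g := logx p x (g * x / g).

Definition conj_aut g := cyclo_aut p (conj_exp g).

Lemma conj_aut_xi g k : g * x / g = x ^+ k -> coprime k p -> conj_aut g xi = xi ^+ k.
Proof.
move=> gxk kp; have gxP : g * x / g \in P by rewrite gxk expx_in.
have /eqP e : x ^+ conj_exp g == x ^+ k by rewrite (expx_logx gxP) gxk.
rewrite /conj_aut cyclo_aut_xi; first by apply/eqP; rewrite -eq_expx_xi e.
move: e => /eqP; rewrite eq_expx => /eqP e.
by rewrite -coprime_modl e coprime_modl.
Qed.

Lemma normalizer_conj g : N g ->
  [/\ g \is a GRing.unit, g * x / g \in P, g^-1 * x * g \in P & coprime (conj_exp g) p].
Proof.
case=> Sg gP; have g_unit := S_unit Sg.
have gxP : g * x / g \in P by move: (gP x); rewrite xP !mulmxE.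
have gVxP : g^-1 * x * g \in P by rewrite gP !mulmxE !mulrA divrr // mul1r mulrK.
split=> //.
have gx := expx_logx gxP.
rewrite coprime_sym prime_coprime // gtnNdvd // ?(logx_lt gxP) //.
rewrite lt0n; apply: contra_neq x_neq1 => k0; move: gx; rewrite /conj_exp in k0.
rewrite k0 expr0 => /(congr1 (fun y => y * g)).
by rewrite divrK // mul1r -{1}[g]mulr1 => /(mulrI g_unit).
Qed.

Lemma normalizer_conj_exp g : N g -> g * x / g = x ^+ conj_exp g.
Proof. by case/normalizer_conj => _ gxP _ _; rewrite expx_logx. Qed.

Lemma conj_autM g h y : N g -> N h -> Zinv_adj n xi y ->
  conj_aut (g *m h) y = conj_aut g (conj_aut h y).
Proof.
move=> Ng Nh; apply: (Zinv_adj_rmorph_eq (g := conj_aut g \o conj_aut h)).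
have [g_unit _ _ kg] := normalizer_conj Ng; have [h_unit _ _ kh] := normalizer_conj Nh.
have ghx : g * h * x / (g * h) = x ^+ (conj_exp g * conj_exp h).
  have -> : g * h * x / (g * h) = g * (h * x / h) / g by rewrite invrM // !mulrA.
  by rewrite (normalizer_conj_exp Nh) conjr_expr // (normalizer_conj_exp Ng) exprM.
rewrite mulmxE (conj_aut_xi ghx) ?coprimeMl ?kg //= (conj_aut_xi (normalizer_conj_exp Nh)) //.
by rewrite rmorphXn (conj_aut_xi (normalizer_conj_exp Ng)) // exprM.
Qed.

Lemma conj_aut_ker g : N g -> (forall y, Zinv_adj n xi y -> conj_aut g y = y) <-> C g.
Proof.
move=> Ng; have [g_unit _ _ kg] := normalizer_conj Ng; split => [fix_Zxi | Cg].
  have gx : g * x / g = x.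
    apply/eqP; rewrite normalizer_conj_exp // -[X in _ == X]expr1 eq_expx_xi.
    by rewrite -(conj_aut_xi (normalizer_conj_exp Ng)) // (fix_Zxi _ (Zinv_adj_gen n xi)) expr1.
  split; first by case: Ng.
  by apply: comm_x_P; rewrite /GRing.comm -{1}gx divrK.
have gx : g * x / g = x ^+ 1 by rewrite expr1 -(centralizer_comm Cg) mulrK.
by apply: (Zinv_adj_rmorph_eq (g := idfun)); rewrite (conj_aut_xi gx) ?coprime1n ?expr1.
Qed.

Lemma xi_eigval_normalizer_conj g c : N g -> C c ->
  xi_eigval (g *m c *m invmx g) = conj_aut g (xi_eigval c).
Proof.
move=> Ng Cc; have [g_unit _ gVxP kg] := normalizer_conj Ng.
have gx : g * x = x ^+ conj_exp g * g by rewrite -(normalizer_conj_exp Ng) divrK.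
rewrite !mulmxE; apply: xi_eigval_conjg gx (centralizer_comm Cc) _ => //.
case: Cc => _ /(_ _ gVxP); rewrite !mulmxE => /(congr1 (fun y => g * y / g)) /=.
by rewrite /GRing.comm !mulrA mulrK // divrr // mul1r => ->.
Qed.

Lemma normalizer_faithful g : N g -> (forall c, C c -> g *m c *m invmx g = c) -> C g.
Proof.
move=> Ng /(_ x centralizer_x); rewrite !mulmxE => gx; split; first by case: Ng.
by apply: comm_x_P; rewrite /GRing.comm -{1}gx divrK //; case/normalizer_conj: Ng.
Qed.

Theorem galois_action_on_centralizer :
  (exists (phi : 'M[rat]_m.+1 -> algC) (psi : 'M[rat]_m.+1 -> {rmorphism algC -> algC}),
     (forall c, C c -> unit_in (Zinv_adj n xi) (phi c)) /\
     (forall c d, C c -> C d -> phi (c *m d) = phi c * phi d) /\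
     (forall c d, C c -> C d -> phi c = phi d -> c = d) /\
     (forall g h y, N g -> N h -> Zinv_adj n xi y -> psi (g *m h) y = psi g (psi h y)) /\
     (forall g, N g -> (forall y, Zinv_adj n xi y -> psi g y = y) <-> C g) /\
     (forall g c, N g -> C c -> phi (g *m c *m invmx g) = psi g (phi c)))
  /\ (forall g, N g -> (forall c, C c -> g *m c *m invmx g = c) -> C g).
Proof.
split; last exact: normalizer_faithful.
exists xi_eigval, conj_aut; split; first exact: xi_eigval_unit.
split; first by move=> c d Cc Cd; apply: xi_eigvalM; apply: centralizer_comm.
split; first by move=> c d Cc Cd; apply: xi_eigval_inj; apply: centralizer_comm.
split; first exact: conj_autM.
split; [exact: conj_aut_ker | exact: xi_eigval_normalizer_conj].
Qed.

End CentralizerNormalizer.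
End RationalMatrixOfPrimeOrder.

Lemma Jmat_sqr m : Jmat m *m Jmat m = - 1%:M.
Proof.
rewrite /Jmat mulmx_block !mul0mx !mulmx0 !mul1mx !mulmx1 !addr0 !add0r.
by rewrite [1%:M in RHS]scalar_mx_block opp_block_mx !oppr0.
Qed.

Lemma Sp_mulmx_inv m n (M : 'M[rat]_(m + m)) :
  in_Sp n M -> - (Jmat m *m M^T *m Jmat m) *m M = 1%:M.
Proof. by case=> _ MJM; rewrite mulNmx -!mulmxA (mulmxA M^T) MJM Jmat_sqr opprK. Qed.

Lemma Sp_unitmx m n (M : 'M[rat]_(m + m)) : in_Sp n M -> M \in unitmx.
Proof. by move/Sp_mulmx_inv/mulmx1_unit => []. Qed.

Lemma Sp_invmx m n (M : 'M[rat]_(m + m)) :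
  in_Sp n M -> invmx M = - (Jmat m *m M^T *m Jmat m).
Proof.
move=> SpM; rewrite -[LHS]mul1mx -(Sp_mulmx_inv SpM) -(mulmxA _ M) mulmxV ?mulmx1 //.
exact: Sp_unitmx SpM.
Qed.

Lemma Zinv_Jmat n m : Zinv_mx n (Jmat m).
Proof.
have Zinv_id i j : Zinv n ((1%:M : 'M_m) i j).
  by rewrite mxE; case: eqP => _; [apply: (Zinv_int n 1) | apply: (Zinv_int n 0)].
move=> i j; rewrite /Jmat -[i]splitK -[j]splitK.
case: (split i) => i'; case: (split j) => j' /=.
- by rewrite block_mxEul mxE; apply: (Zinv_int n 0).
- by rewrite block_mxEur.
- by rewrite block_mxEdl mxE; apply: ZinvN.
- by rewrite block_mxEdr mxE; apply: (Zinv_int n 0).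
Qed.

Lemma Sp_inv m n (M : 'M[rat]_(m + m)) : in_Sp n M -> in_Sp n (invmx M).
Proof.
move=> SpM; have M_unit := Sp_unitmx SpM; split.
  rewrite (Sp_invmx SpM); apply/Zinv_mxN/Zinv_mxM; last exact: Zinv_Jmat.
  by apply: Zinv_mxM; [exact: Zinv_Jmat | case: SpM => ZM _ i j; rewrite mxE].
case: SpM => _ MJM.
by rewrite -{1}MJM !mulmxA -trmx_mul -(mulmxA _ M) mulmxV // mulmx1 trmx1 mul1mx.
Qed.

Lemma uniq_exists_neq (T : eqType) (s : seq T) (a : T) :
  uniq s -> (1 < size s)%N -> exists2 y, y \in s & y != a.
Proof.
move=> s_uniq s_gt1; have [/hasP [y ys ya] | /hasPn s_a] := boolP (has (predC1 a) s).
  by exists y.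
suff : (size s <= size [:: a])%N by rewrite leqNgt s_gt1.
by apply: uniq_leq_size => // y /s_a; rewrite mem_seq1 negbK.
Qed.

Theorem theorem4p3 (p : nat) (n : int) (xi : algC)
    (P : seq 'M[rat]_(hdim p + hdim p)) :
  prime p -> odd p -> n != 0 -> (p%:Z %| n)%Z ->
  p.-primitive_root xi ->
  is_PID (Zinv_adj n xi) -> is_PID (Zinv_adj n (xi + xi^-1)) ->
  subgroup_of_order n P p ->
  (exists (phi : 'M[rat]_(hdim p + hdim p) -> algC)
          (psi : 'M[rat]_(hdim p + hdim p) -> {rmorphism algC -> algC}),
     (* phi : C(P) -> Z[1/n][xi]^* is an injective group homomorphism *)
     (forall c, centralizer n P c -> unit_in (Zinv_adj n xi) (phi c)) /\
         (forall c d, centralizer n P c -> centralizer n P d ->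
            phi (c *m d) = phi c * phi d) /\
         (forall c d, centralizer n P c -> centralizer n P d ->
            phi c = phi d -> c = d) /\
     (* psi : N(P) -> Gal(Q(xi)/Q) is a homomorphism with kernel C(P),
        an element of Gal(Q(xi)/Q) being the restriction to Q(xi) of a
        ring endomorphism of algC (equality = agreement on Z[1/n][xi]) *)
         (forall g h x, normalizer n P g -> normalizer n P h ->
            Zinv_adj n xi x -> psi (g *m h) x = psi g (psi h x)) /\
         (forall g, normalizer n P g ->
            (forall x, Zinv_adj n xi x -> psi g x = x) <-> centralizer n P g) /\
     (* the conjugation action corresponds to the Galois action *)
         (forall g c, normalizer n P g -> centralizer n P c ->
            phi (g *m c *m invmx g) = psi g (phi c)))
  /\
  (* faithfulness of N(P)/C(P) on C(P) *)
  (forall g, normalizer n P g ->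
     (forall c, centralizer n P c -> g *m c *m invmx g = c) ->
     centralizer n P g).
Proof.
move=> p_prime p_odd _ p_dvd_n xi_prim _ _ [P_uniq [P_size [P_Sp [P1 [P_mul _]]]]].
have dimE : (hdim p + hdim p)%N.+1 = p.
  by rewrite /hdim; move: p_odd (prime_gt0 p_prime); lia.
have [x xP x_neq1] : exists2 x, x \in P & x != 1%:M.
  by apply: uniq_exists_neq; rewrite ?P_size ?prime_gt1.
(* Abstract [in_Sp], then the dimension, so that it becomes some [m.+1], where square
   matrices form a ring. *)
rewrite /centralizer /normalizer.
have Sp_Zinv (M : 'M_(hdim p + hdim p)) : in_Sp n M -> Zinv_mx n M by case.
move: (@in_Sp (hdim p) n) (@Sp_unitmx (hdim p) n) (@Sp_inv (hdim p) n) Sp_Zinv P_Sp.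
move=> S S_unit S_inv S_Zinv P_S.
move: dimE S S_unit S_inv S_Zinv P P_uniq P_size P_S P1 P_mul x xP x_neq1.
move: (hdim p + hdim p)%N => [|m] dimE; first by have := prime_gt1 p_prime; rewrite -dimE.
move=> S S_unit S_inv S_Zinv P P_uniq P_size P_S P1 P_mul x xP x_neq1; subst p.
have P_unit : {in P, forall y, y \is a GRing.unit} by move=> y /P_S /S_unit.
have x_order := expx_order p_prime P_uniq P_size P_unit P1 P_mul xP x_neq1.
exact: (galois_action_on_centralizer p_prime xi_prim x_order x_neq1 p_dvd_n
          S_unit S_inv S_Zinv P_uniq P_size P_S P1 P_mul xP).
Qed.
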